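(* Let $\mathcal{G}$ be a MAG and let $H,H'$ be heads with maximal vertex $i$. Suppose $K^m$ is a set with $H\to^{K^m}H'$ such that $K^m\subseteq K$ for every $K$ with $H\to^KH'$. Then for $\emptyset\ne K\subseteq H\setminus\{i\}$, we have $H\to^KH'$ if and only if $K=K^m\,\dot\cup\,B$ for some $B\subseteq H\setminus(H'\cup K^m)$.
   Context: A MAG is an acyclic directed mixed graph (directed and bidirected edges, no directed cycles) with $\mathrm{sib}(v)\cap\mathrm{an}(v)=\emptyset$ for all $v$ and in which every nonadjacent pair is m-separated by some set. Vertices are numbered topologically. $\mathrm{barren}_{\mathcal{G}'}(W)=\{w\in W:\mathrm{de}_{\mathcal{G}'}(w)\cap W=\{w\}\}$; a nonempty $H$ is a head if $\mathrm{barren}(H)=H$ and $H$ lies in one district of $\mathcal{G}_{\mathrm{an}(H)}$. For a head $H$ with maximal vertex $i$ and $\emptyset\ne K\subseteq H\setminus\{i\}$, $H\to^KH'$ means $H'=\mathrm{barren}_{\mathcal{G}'}(\mathrm{dis}_{\mathcal{G}'}(i))$ where $\mathcal{G}'=\mathcal{G}_{\mathrm{an}(H)\setminus K}$. $\dot\cup$ denotes disjoint union. *)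

From mathcomp Require Import all_boot.
Set Implicit Arguments. Unset Strict Implicit. Unset Printing Implicit Defensive.

Section MixedGraph.
Variable n : nat.
(* d u v : directed edge u -> v ;  b u v : bidirected edge u <-> v *)
Variables (d b : rel 'I_n).

(* restriction of a relation to a vertex set W (edges of the induced subgraph G_W) *)
Definition restr (e : rel 'I_n) (W : {set 'I_n}) : rel 'I_n :=
  fun x y => [&& e x y, x \in W & y \in W].

(* ancestors / descendants of v in the induced subgraph G_W (including v itself) *)
Definition anc (W : {set 'I_n}) (v : 'I_n) : {set 'I_n} :=
  [set u in W | (v \in W) && connect (restr d W) u v].
Definition desc (W : {set 'I_n}) (v : 'I_n) : {set 'I_n} :=
  [set u in W | (v \in W) && connect (restr d W) v u].
Definition ancS (W S : {set 'I_n}) : {set 'I_n} := \bigcup_(v in S) anc W v.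

Definition sib (v : 'I_n) : {set 'I_n} := [set u | b u v].

Definition dis (W : {set 'I_n}) (v : 'I_n) : {set 'I_n} :=
  [set u in W | (v \in W) && connect (restr b W) v u].

Definition barren (W S : {set 'I_n}) : {set 'I_n} :=
  [set w in S | desc W w :&: S == [set w]].

Definition adj (u v : 'I_n) : bool := [|| d u v, d v u | b u v].
Definition arrowhead_at (u v : 'I_n) : bool := d u v || b u v.

Definition mconnected (Z : {set 'I_n}) (x y : 'I_n) : Prop :=
  exists s : seq 'I_n,
    [/\ last x s = y, uniq (x :: s), path adj x s &
      forall k, 0 < k < (size (x :: s)).-1 ->
        let u := nth x (x :: s) k.-1 in
        let v := nth x (x :: s) k in
        let w := nth x (x :: s) k.+1 in
        if arrowhead_at u v && arrowhead_at w v
        then v \in ancS setT Z          (* collider: in an(Z) *)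
        else v \notin Z].              (* non-collider: not in Z *)

Definition mseparated (Z : {set 'I_n}) (x y : 'I_n) : Prop :=
  [/\ x \notin Z, y \notin Z & ~ mconnected Z x y].

Definition is_MAG : Prop :=
  [/\ (forall u v, b u v = b v u),
      (forall u v, d u v -> ~~ connect d v u),
      (forall v, sib v :&: anc setT v = set0)                    (* ancestral *)
    & (forall x y, x != y -> ~~ adj x y ->
         exists Z : {set 'I_n}, mseparated Z x y)].               (* maximal *)

Definition topological : Prop := forall u v, d u v -> (u < v)%N.

Definition is_head (H : {set 'I_n}) : Prop :=
  [/\ H != set0, barren setT H = H &
      exists v, H \subset dis (ancS setT H) v].

Definition max_vertex (H : {set 'I_n}) (i : 'I_n) : Prop :=
  i \in H /\ forall h, h \in H -> (h <= i)%N.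

(* H ->^K H' (i the maximal vertex of H) *)
Definition head_arrow (H : {set 'I_n}) (i : 'I_n) (K H' : {set 'I_n}) : Prop :=
  [/\ K != set0, K \subset H :\ i &
      let W := ancS setT H :\: K in H' = barren W (dis W i)].

End MixedGraph.

(* Every vertex h of the barren set H is a sink of G_{an(H)}: a descendant of h inside an(H)
   is an ancestor of some h' in H, and h' = h is excluded by acyclicity, h' <> h by
   barrenness.  Deleting from an(H) \ K^m further vertices B of H \ H' therefore changes
   nothing: no vertex of B lies in dis(i), as a sink there would be barren, i.e. in H', and
   a sink can occur on a directed path only as its endpoint.  Conversely every K with
   H ->^K H' contains K^m and misses H' ⊆ an(H) \ K.  Only acyclicity (through the
   topological numbering) and the barrenness of H are needed. *)
From mathcomp Require Import all_boot.

Set Implicit Arguments.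
Unset Strict Implicit.
Unset Printing Implicit Defensive.

Section Restriction.
Variables (n : nat) (e : rel 'I_n).

Lemma connect_restr_subset (W1 W2 : {set 'I_n}) x y :
  W1 \subset W2 -> connect (restr e W1) x y -> connect (restr e W2) x y.
Proof.
move=> sW; apply: connect_sub => u v /and3P[euv uW vW]; apply: connect1.
by rewrite /restr euv (subsetP sW _ uW) (subsetP sW _ vW).
Qed.

Lemma connect_restr_mem (W : {set 'I_n}) x y :
  x \in W -> connect (restr e W) x y -> y \in W.
Proof.
move=> xW /connectP[p]; elim: p x xW => [|z p IHp] x xW /=; first by move=> _ ->.
by case/andP=> /and3P[_ _ zW]; apply: IHp.
Qed.

Lemma connect_restrD (W B : {set 'I_n}) x y :
  (forall v, connect (restr e W) x v -> connect (restr e W) v y -> v \notin B) ->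
  connect (restr e W) x y -> connect (restr e (W :\: B)) x y.
Proof.
move=> notB /connectP[p]; elim: p x notB => [|z p IHp] x notB /=; first by move=> _ ->.
case/andP=> exz pz yz; have zy : connect (restr e W) z y by apply/connectP; exists p.
have xB : x \notin B by apply: notB (connect_trans (connect1 exz) zy).
have zB : z \notin B by apply: notB (connect1 exz) zy.
apply: connect_trans (connect1 _) (IHp _ _ pz yz).
  by case/and3P: exz => exz xW zW; rewrite /restr exz !inE xB zB xW zW.
by move=> v zv vy; apply: notB (connect_trans (connect1 exz) zv) vy.
Qed.

Lemma connect_restr_leq (W : {set 'I_n}) x y :
  topological e -> connect (restr e W) x y -> x <= y.
Proof.
move=> top /connectP[p]; elim: p x => [|z p IHp] x /=; first by move=> _ ->.
by case/andP=> /and3P[exz _ _] pz yz; apply: leq_trans (ltnW (top _ _ exz)) (IHp _ pz yz).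
Qed.

End Restriction.

Section Heads.
Variables (n : nat) (d b : rel 'I_n).

Lemma barren_anc_sink (H W : {set 'I_n}) h z :
  topological d -> barren d setT H = H -> W \subset ancS d setT H -> h \in H ->
  connect (restr d W) h z -> z = h.
Proof.
move=> top barH sWA hH /connectP[[|y p]] /=; first by move=> _ ->.
case/andP=> /and3P[dhy _ yW] _ _; exfalso.
have /bigcupP[h' h'H] := subsetP sWA _ yW.
rewrite inE => /andP[_ /andP[_ yh']].
have hh' : connect (restr d setT) h h'.
  by apply: connect_trans (connect1 _) yh'; rewrite /restr dhy !inE.
have [eh'h | neh'h] := eqVneq h' h.
  by move: (connect_restr_leq top yh'); rewrite eh'h leqNgt top.
have : h \in barren d setT H by rewrite barH.
by rewrite inE hH => /eqP/setP/(_ h'); rewrite !inE h'H hh' (negbTE neh'h).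
Qed.

Lemma sink_in_barren (W S : {set 'I_n}) x :
  x \in S -> x \in W -> (forall z, connect (restr d W) x z -> z = x) ->
  x \in barren d W S.
Proof.
move=> xS xW sink; rewrite inE xS; apply/eqP/setP=> u; rewrite !inE.
apply/andP/eqP=> [[/andP[_ /andP[_ /sink]]] // | ->].
by rewrite xW connect0.
Qed.

Lemma dis_setD (W B : {set 'I_n}) i :
  [disjoint B & dis b W i] -> dis b (W :\: B) i = dis b W i.
Proof.
move=> BD; have notB u : u \in dis b W i -> u \notin B.
  by move=> uD; apply: contraTN uD => uB; rewrite (disjointFr BD uB).
apply/setP=> u; apply/idP/idP.
  rewrite !inE => /and3P[/andP[_ uW] /andP[_ iW] iu].
  by rewrite uW iW (connect_restr_subset (subsetDl W B)).
move=> uD; move: (uD); rewrite inE => /and3P[uW iW iu].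
rewrite inE !in_setD (notB _ uD) uW iW /= (notB i); last by rewrite !inE iW connect0.
apply: connect_restrD iu => v iv _; apply: notB.
by rewrite !inE iW iv (connect_restr_mem iW iv).
Qed.

Lemma barren_setD (W B S : {set 'I_n}) :
  [disjoint B & S] -> {in B, forall x z, connect (restr d W) x z -> z = x} ->
  barren d (W :\: B) S = barren d W S.
Proof.
move=> BS sinkB; have notB u : u \in S -> u \notin B.
  by move=> uS; apply: contraTN uS => uB; rewrite (disjointFr BS uB).
apply/setP=> w; rewrite !inE; case wS: (w \in S) => //=.
congr (_ == _); apply/setP=> u; rewrite !inE.
case uS: (u \in S); rewrite ?andbF // !andbT (notB _ uS) (notB _ wS) /=.
apply/idP/idP=> /and3P[-> -> wu] /=.
  exact: connect_restr_subset (subsetDl W B) wu.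
apply: connect_restrD wu => v _ vu; apply: contraTN uS => vB.
by rewrite (sinkB v vB u vu) (negbTE (contraTN (notB v) vB)).
Qed.

Lemma barren_dis_setD (W B : {set 'I_n}) i :
  {in B, forall x z, connect (restr d W) x z -> z = x} ->
  [disjoint B & barren d W (dis b W i)] ->
  barren d (W :\: B) (dis b (W :\: B) i) = barren d W (dis b W i).
Proof.
move=> sinkB BH'; have BD : [disjoint B & dis b W i].
  rewrite disjoint_subset; apply/subsetP=> x xB; rewrite inE; apply/negP=> xD.
  have xW : x \in W by move: xD; rewrite inE => /andP[].
  by move: (disjointFr BH' xB); rewrite sink_in_barren // => z; apply: sinkB.
by rewrite dis_setD // barren_setD.
Qed.

Lemma head_arrow_disjoint (H H' K : {set 'I_n}) i :
  head_arrow d b H i K H' -> [disjoint K & H'].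
Proof.
case=> _ _ ->; rewrite disjoint_subset; apply/subsetP=> x xK.
by rewrite !inE xK.
Qed.

Lemma head_arrow_setU (H H' K B : {set 'I_n}) i :
  topological d -> barren d setT H = H -> B \subset H :\: H' ->
  K :|: B \subset H :\ i -> head_arrow d b H i K H' -> head_arrow d b H i (K :|: B) H'.
Proof.
move=> top barH sB sKB [K0 _ defH']; split=> //=.
  by rewrite setU_eq0 negb_and K0.
rewrite -setDDl barren_dis_setD -?defH' //.
  move=> x /(subsetP sB)/setDP[xH _] z.
  exact: barren_anc_sink top barH (subsetDl _ _) xH.
by case/subsetDP: sB.
Qed.

End Heads.

Theorem lemmaC3 (n : nat) (d b : rel 'I_n) (H H' Km : {set 'I_n}) (i : 'I_n) :
  is_MAG d b -> topological d ->
  is_head d b H -> is_head d b H' ->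
  max_vertex H i -> max_vertex H' i ->
  head_arrow d b H i Km H' ->
  (forall K, head_arrow d b H i K H' -> Km \subset K) ->
  forall K : {set 'I_n}, K != set0 -> K \subset H :\ i ->
    (head_arrow d b H i K H' <->
     exists B : {set 'I_n},
       [/\ B \subset H :\: (H' :|: Km), [disjoint Km & B] & K = Km :|: B]).
Proof.
move=> _ top [_ barH _] _ _ _ hKm minK K _ sK; split=> [hK | [B [sB _ eK]]].
  exists (K :\: Km); split.
  - apply/subsetP=> x /setDP[xK xKm]; have := subsetP sK x xK.
    by rewrite !inE (negbTE xKm) (disjointFr (head_arrow_disjoint hK) xK) => /andP[].
  - by rewrite disjoint_sym; case/subsetDP: (subxx (K :\: Km)).
  - by rewrite -{1}(setID K Km) (setIidPr (minK K hK)).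
rewrite eK in sK *; apply: head_arrow_setU => //.
exact: subset_trans sB (setDS _ (subsetUl _ _)).
Qed.
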